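(* Let $G=(V,E,\omega)\in\mathcal G$ and let $S$ be a proper subset of $V$. Let $\nu^S$ be the equilibrium measure for $S$, $\kappa_S$ the graph curvature of $S$, and $\kappa_S^+=\max_{i\in V}(\kappa_S)_i$. Then $\nu^S_i\geq(\kappa_S^+)^{-1}$ for all $i\in S$.
   Context: $\mathcal{G}$ is the set of finite, simple, connected, undirected, edge-weighted graphs $G=(V,E,\omega)$ with $V=\{1,\dots,n\}$, $n\geq2$, weights $\omega_{ij}=\omega_{ji}>0$ on edges, $0$ otherwise. $d_i=\sum_j\omega_{ij}$. $\mathcal V$: functions $V\to\mathbb R$. Fixed $r\in[0,1]$; $(\Delta u)_i=d_i^{-r}\sum_j\omega_{ij}(u_i-u_j)$. For a proper subset $S\subsetneq V$, the equilibrium measure $\nu^S$ is the unique $\nu\in\mathcal V$ with $(\Delta\nu)_i=1$ for $i\in S$ and $\nu_i=0$ for $i\in V\setminus S$. Graph curvature (with $q=1$): $(\kappa_S)_i=d_i^{-r}\sum_{j\in V\setminus S}\omega_{ij}$ if $i\in S$, and $(\kappa_S)_i=-d_i^{-r}\sum_{j\in S}\omega_{ij}$ if $i\in V\setminus S$. *)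

From HB Require Import structures.
From mathcomp Require Import all_boot all_order all_algebra.
From mathcomp Require Import reals exp.
Set Implicit Arguments. Unset Strict Implicit. Unset Printing Implicit Defensive.
Import Order.TTheory GRing.Theory Num.Theory.
Local Open Scope ring_scope.

Section GraphDefs.
Variables (R : realType) (n : nat).

(* A graph in the class G on vertex set 'I_n (= {1,...,n} shifted to {0,...,n-1}):
   symmetric nonnegative weights, no loops, connected via edges (w i j > 0). *)
Definition edge (w : 'I_n -> 'I_n -> R) : rel 'I_n := fun i j => 0 < w i j.

Definition is_wgraph (w : 'I_n -> 'I_n -> R) : Prop :=
  [/\ (2 <= n)%N,
      forall i j, w i j = w j i,
      forall i j, 0 <= w i j,
      forall i, w i i = 0
    & forall i j, connect (edge w) i j].

Definition deg (w : 'I_n -> 'I_n -> R) (i : 'I_n) : R := \sum_j w i j.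

Definition lap (r : R) (w : 'I_n -> 'I_n -> R) (u : 'I_n -> R) (i : 'I_n) : R :=
  (deg w i) `^ (- r) * \sum_j w i j * (u i - u j).

Definition is_equilibrium (r : R) (w : 'I_n -> 'I_n -> R) (S : {set 'I_n})
  (nu : 'I_n -> R) : Prop :=
  (forall i, i \in S -> lap r w nu i = 1) /\ (forall i, i \notin S -> nu i = 0).

(* graph curvature kappa_S (q = 1) *)
Definition curv (r : R) (w : 'I_n -> 'I_n -> R) (S : {set 'I_n}) (i : 'I_n) : R :=
  if i \in S then (deg w i) `^ (- r) * \sum_(j in ~: S) w i j
  else - ((deg w i) `^ (- r) * \sum_(j in S) w i j).

(* kappa_S^+ = max_i (kappa_S)_i.  The seed 0 is harmless: curv is >= 0 on S and
   identically 0 when S is empty, so the maximum is always >= 0. *)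
Definition curv_max (r : R) (w : 'I_n -> 'I_n -> R) (S : {set 'I_n}) : R :=
  \big[Num.max/0]_(i < n) curv r w S i.

End GraphDefs.

(* Let k minimise nu over S.  At k every term w_kj (nu_k - nu_j) with j in S is
   nonpositive, and for j outside S it equals w_kj nu_k, so
   1 = (Delta nu)_k <= nu_k (kappa_S)_k <= nu_k kappa_S^+.  Hence kappa_S^+ > 0
   and nu_i >= nu_k >= 1 / kappa_S^+ for every i in S. *)
From HB Require Import structures.
From mathcomp Require Import all_boot all_order all_algebra.
From mathcomp Require Import reals exp.
Import Order.TTheory GRing.Theory Num.Theory.
Local Open Scope ring_scope.

Lemma invr_le_of_mul_ge1 (R : numFieldType) (x y m : R) :
  0 <= y -> y <= m -> 1 <= x * y -> m^-1 <= x.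
Proof.
move=> y_ge0 le_ym xy_ge1.
have y_gt0 : 0 < y.
  rewrite lt_def y_ge0 andbT; apply: contraTneq xy_ge1 => ->.
  by rewrite mulr0 ler10.
have m_gt0 : 0 < m := lt_le_trans y_gt0 le_ym.
apply: le_trans (_ : y^-1 <= x); first by rewrite lef_pV2 ?posrE.
by rewrite -div1r ler_pdivrMr.
Qed.

Section Curvature.
Variables (R : realType) (n : nat) (w : 'I_n -> 'I_n -> R) (r : R).
Variable S : {set 'I_n}.

Lemma curv_le_max i : curv r w S i <= curv_max r w S.
Proof. exact: le_bigmax. Qed.

Hypothesis w_ge0 : forall i j, 0 <= w i j.

Lemma lap_le_mul_curv_at_min (u : 'I_n -> R) k :
  (forall j, j \notin S -> u j = 0) -> k \in S ->
  (forall j, j \in S -> u k <= u j) ->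
  lap r w u k <= u k * curv r w S k.
Proof.
move=> u_out kS kmin.
rewrite /lap /curv kS mulrCA ler_wpM2l ?powR_ge0 //.
rewrite (bigID (mem S)) /= -[leRHS]add0r lerD //.
  by apply: sumr_le0 => j jS; rewrite mulr_ge0_le0 // subr_le0 kmin.
rewrite big_distrr /= (eq_bigl (fun j => j \in ~: S)) => [|j]; last by rewrite /= inE.
apply: ler_sum => j; rewrite in_setC => /u_out ->.
by rewrite subr0 mulrC.
Qed.

End Curvature.

Theorem lemma3p8 (R : realType) (n : nat) (w : 'I_n -> 'I_n -> R) (r : R)
  (S : {set 'I_n}) (nu : 'I_n -> R) :
  is_wgraph w -> 0 <= r <= 1 -> S \proper [set: 'I_n] ->
  is_equilibrium r w S nu ->
  forall i, i \in S -> (curv_max r w S)^-1 <= nu i.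
Proof.
move=> [_ _ w_ge0 _ _] _ _ [lap_nu nu_out] i iS.
have [k kS' kmin] := Order.TotalTheory.arg_minP nu iS.
have kS : k \in S := kS'.
have curv_k_ge0 : 0 <= curv r w S k.
  by rewrite /curv kS mulr_ge0 ?powR_ge0 ?sumr_ge0.
have one_le : 1 <= nu k * curv r w S k.
  by rewrite -(lap_nu k kS) lap_le_mul_curv_at_min.
apply: le_trans _ (kmin i iS).
apply: invr_le_of_mul_ge1 curv_k_ge0 _ one_le.
exact: curv_le_max.
Qed.
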